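(* Under the standing assumptions of the context, for any real $a<b$, $\|\widehat{\varphi_l}-\widehat{\varphi^M}\|_{C[a,b]}=O(\mu(l))$ as $l\to\infty$, where $\|\cdot\|_{C[a,b]}$ is the sup norm on $[a,b]$.
   Context: Fourier transform: $\widehat f(\omega)=\int_{\mathbb{R}}f(t)e^{-it\omega}\,dt$. Let $\theta$ be odd, non-decreasing, $C^2$, with $\theta(\omega)=\pi/4$ for $\omega>\pi/3$; fix $\pi/3\le\omega_0<\pi/2$. Meyer scaling function: $\widehat{\varphi^M}(\omega)=1$ for $|\omega|\le2\omega_0$, $=\cos(\frac\pi4+\theta(\frac{\pi}{3(\pi-2\omega_0)}(|\omega|-\pi)))$ for $2\omega_0<|\omega|\le2\pi-2\omega_0$, $=0$ otherwise. Meyer mask: $2\pi$-periodic $m^M$ with $m^M(\omega)=\widehat{\varphi^M}(2\omega)$ on $[-\pi,\pi]$. $\|\cdot\|_C$: sup norm on $[-\pi,\pi]$. A linear method of summation $(\lambda_{n,k})$ maps $f$ with Fourier coefficients $a_k,b_k$ to $u_n(f,\omega)=\frac{a_0}2+\sum_{k=1}^n\lambda_{n,k}(a_k\cos k\omega+b_k\sin k\omega)$. $m^M_l:=m^M/(\cos\frac\omega2)^{2l}$. Standing assumptions: a method and a sequence $n(l)$ are fixed with $u_l:=u_{n(l)}(m^M_l,\cdot)$, $u_{1,l}:=u_{n(l)}((m^M_l)',\cdot)$ satisfying $\alpha(l):=\|u_l-m^M_l\|_C=o(l^{-1})$, $\gamma(l):=\|u_{1,l}-(m^M_l)'\|_C=o(1)$,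 $u_l(\pi)\ne0$; $l_0$ is fixed with $\inf_{l\ge l_0}|u_l(0)|>0$ and $l\ge l_0$. $\mu(l):=l\alpha(l)+\gamma(l)$. $m_l(\omega):=(\cos\frac\omega2)^{2l}u_l(\omega)/u_l(0)$, $\widehat{\varphi_l}(\omega):=\prod_{j\ge1}m_l(\omega2^{-j})$. *)

From Stdlib Require Import Reals.
From Coquelicot Require Import Coquelicot.
Open Scope R_scope.

(* Meyer scaling function (Fourier transform), parameterized by theta and omega0. *)
Definition phiM (theta : R -> R) (omega0 : R) (w : R) : R :=
  if Rle_dec (Rabs w) (2 * omega0) then 1
  else if Rle_dec (Rabs w) (2 * PI - 2 * omega0) then
    cos (PI / 4 + theta (PI / (3 * (PI - 2 * omega0)) * (Rabs w - PI)))
  else 0.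

(* reduction of w modulo 2*pi into [-pi, pi) *)
Definition red2pi (w : R) : R :=
  w - 2 * PI * (IZR (up ((w + PI) / (2 * PI))) - 1).

Definition mM (theta : R -> R) (omega0 : R) (w : R) : R :=
  phiM theta omega0 (2 * red2pi w).

(* m^M_l := m^M / (cos(w/2))^(2l)   (Rocq's x/0 = 0 convention at w = pi + 2k pi,
   where m^M vanishes anyway) *)
Definition mMl (theta : R -> R) (omega0 : R) (l : nat) (w : R) : R :=
  mM theta omega0 w / (cos (w / 2)) ^ (2 * l).

Definition fa (f : R -> R) (k : nat) : R :=
  / PI * RInt (fun t => f t * cos (INR k * t)) (- PI) PI.
Definition fb (f : R -> R) (k : nat) : R :=
  / PI * RInt (fun t => f t * sin (INR k * t)) (- PI) PI.

Definition usum (lam : nat -> nat -> R) (n : nat) (f : R -> R) (w : R) : R :=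
  fa f 0 / 2 +
  sum_n_m (fun k => lam n k * (fa f k * cos (INR k * w) + fb f k * sin (INR k * w))) 1 n.

Definition supnorm (a b : R) (f : R -> R) : R :=
  real (Lub_Rbar (fun y => exists x, a <= x <= b /\ y = Rabs (f x))).

Definition ul theta omega0 lam (nl : nat -> nat) (l : nat) : R -> R :=
  usum lam (nl l) (mMl theta omega0 l).
Definition u1l theta omega0 lam (nl : nat -> nat) (l : nat) : R -> R :=
  usum lam (nl l) (Derive (mMl theta omega0 l)).

Definition alpha theta omega0 lam nl (l : nat) : R :=
  supnorm (- PI) PI (fun w => ul theta omega0 lam nl l w - mMl theta omega0 l w).
Definition gamma theta omega0 lam nl (l : nat) : R :=
  supnorm (- PI) PI (fun w => u1l theta omega0 lam nl l w - Derive (mMl theta omega0 l) w).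
Definition mu theta omega0 lam nl (l : nat) : R :=
  INR l * alpha theta omega0 lam nl l + gamma theta omega0 lam nl l.

Definition ml theta omega0 lam nl (l : nat) (w : R) : R :=
  (cos (w / 2)) ^ (2 * l) * ul theta omega0 lam nl l w / ul theta omega0 lam nl l 0.

Fixpoint pprod (g : nat -> R) (N : nat) : R :=
  match N with O => 1 | S N' => pprod g N' * g N end.

Definition phil theta omega0 lam nl (l : nat) (w : R) : R :=
  real (Lim_seq (fun N => pprod (fun j => ml theta omega0 lam nl l (w / 2 ^ j)) N)).

(* Since [mM w = phiM (2 w)], the two-scale relation [phiM x = mM (x/2) * phiM (x/2)]
   gives [phiM w = prod_{j <= J} mM (w / 2^j)] as soon as [|w| <= 2 omega0 2^J].
   The mask [m_l] is within [O(alpha l)] of [mM] everywhere, and within [O(mu l |x|)]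
   of 1 near 0: by the mean value theorem applied to [cos (x/2)^(2l) (u_l - m^M_l)],
   whose derivative is bounded by [l alpha + gamma] because the summation method
   commutes with differentiation ([m^M_l] is C^1 on [[-pi, pi]] and vanishes at
   [+-pi], so integration by parts applies).  Hence the first [J] factors of the
   product defining [phil] are [O(alpha)]-close to those of [phiM], while the
   remaining ones converge to a product within [O(mu)] of 1. *)

From Pilot Require Import Defs.
From Stdlib Require Import Reals Lra Lia ZArith.
From Coquelicot Require Import Coquelicot.
Open Scope R_scope.

Lemma continuous_eq_right (f : R -> R) x0 c :
  continuous f x0 -> (forall x, x > x0 -> f x = c) -> f x0 = c.
Proof.
  intros Hc Hright. destruct (Req_dec (f x0) c) as [|Hne]; auto. exfalso.
  apply continuity_pt_filterlim in Hc.
  destruct (Hc (Rabs (f x0 - c))) as [d [Hd Hball]]; [apply Rabs_pos_lt; lra|].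
  assert (Hnear : R_dist (f (x0 + d / 2)) (f x0) < Rabs (f x0 - c)).
  { apply Hball. split; [split; [exact I|lra]|].
    simpl; unfold R_dist. replace (x0 + d / 2 - x0) with (d / 2) by ring.
    rewrite Rabs_pos_eq; lra. }
  unfold R_dist in Hnear. rewrite Hright, Rabs_minus_sym in Hnear by lra. lra.
Qed.

Lemma cos_period_Z x z : cos (x + 2 * PI * IZR z) = cos x.
Proof.
  destruct (Z_le_dec 0 z).
  - rewrite <- (Z2Nat.id z), <- INR_IZR_INZ by auto.
    replace (2 * PI * INR (Z.to_nat z)) with (2 * INR (Z.to_nat z) * PI) by ring.
    apply cos_period.
  - replace z with (- Z.of_nat (Z.to_nat (- z)))%Z by lia.
    rewrite opp_IZR, <- INR_IZR_INZ.
    rewrite <- (cos_period _ (Z.to_nat (- z))). f_equal. ring.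
Qed.

Lemma sin_period_Z x z : sin (x + 2 * PI * IZR z) = sin x.
Proof.
  destruct (Z_le_dec 0 z).
  - rewrite <- (Z2Nat.id z), <- INR_IZR_INZ by auto.
    replace (2 * PI * INR (Z.to_nat z)) with (2 * INR (Z.to_nat z) * PI) by ring.
    apply sin_period.
  - replace z with (- Z.of_nat (Z.to_nat (- z)))%Z by lia.
    rewrite opp_IZR, <- INR_IZR_INZ.
    rewrite <- (sin_period _ (Z.to_nat (- z))). f_equal. ring.
Qed.

Lemma red2pi_shift w z :
  - PI + 2 * PI * IZR z <= w < PI + 2 * PI * IZR z -> red2pi w = w - 2 * PI * IZR z.
Proof.
  intros Hw. pose proof PI_RGT_0. unfold red2pi.
  assert (Hup : up ((w + PI) / (2 * PI)) = (z + 1)%Z).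
  { assert (Hq : (w + PI) / (2 * PI) = (w + PI - 2 * PI * IZR z) / (2 * PI) + IZR z)
      by (field; lra).
    assert (0 <= (w + PI - 2 * PI * IZR z) / (2 * PI) < 1).
    { split; [apply Rdiv_le_0_compat; lra|].
      apply Rmult_lt_reg_r with (2 * PI); [lra|].
      unfold Rdiv. rewrite Rmult_assoc, Rinv_l; lra. }
    symmetry. apply tech_up; rewrite plus_IZR; simpl; lra. }
  rewrite Hup, plus_IZR. ring.
Qed.

Lemma red2pi_range w : - PI <= red2pi w < PI.
Proof.
  pose proof PI_RGT_0. unfold red2pi. set (r := (w + PI) / (2 * PI)).
  destruct (archimed r) as [Hlo Hhi].
  assert (w + PI = 2 * PI * r) by (unfold r; field; lra).
  split; nra.
Qed.

Lemma red2pi_decomp w : exists z : Z, w = red2pi w + 2 * PI * IZR z.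
Proof.
  exists (up ((w + PI) / (2 * PI)) - 1)%Z. unfold red2pi. rewrite minus_IZR. ring.
Qed.

Lemma red2pi_id w : - PI <= w < PI -> red2pi w = w.
Proof. intros Hw. rewrite (red2pi_shift w 0); simpl; lra. Qed.

Lemma red2pi_idem w : red2pi (red2pi w) = red2pi w.
Proof. apply red2pi_id, red2pi_range. Qed.

Definition C1on (f df : R -> R) :=
  forall t, - PI <= t <= PI -> is_derive f t (df t) /\ continuous df t.

Lemma C1on_continuous f df : C1on f df -> forall t, - PI <= t <= PI -> continuous f t.
Proof.
  intros Hf t Ht. apply (ex_derive_continuous (V := R_NormedModule)).
  exists (df t). apply Hf, Ht.
Qed.

Lemma C1_of_locally_eq (f h dh : R -> R) y eps : 0 < eps ->
  (forall z, Rabs (z - y) < eps -> f z = h z) ->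
  (forall z, Rabs (z - y) < eps -> is_derive h z (dh z)) -> continuous dh y ->
  is_derive f y (dh y) /\ continuous (Derive f) y.
Proof.
  intros Heps Heq Hd Hc.
  assert (Hf : forall z, Rabs (z - y) < eps -> is_derive f z (dh z)).
  { intros z Hz. apply is_derive_ext_loc with h; [|apply Hd, Hz].
    assert (Hr : 0 < eps - Rabs (z - y)) by lra.
    exists (mkposreal _ Hr). intros t Ht. symmetry. apply Heq.
    change (Rabs (t - z) < eps - Rabs (z - y)) in Ht.
    replace (t - y) with ((t - z) + (z - y)) by ring.
    eapply Rle_lt_trans; [apply Rabs_triang|lra]. }
  split; [apply Hf; rewrite Rminus_eq_0, Rabs_R0; lra|].
  apply continuous_ext_loc with dh; auto.
  exists (mkposreal eps Heps). intros t Ht. symmetry.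
  apply is_derive_unique, Hf, Ht.
Qed.

Lemma RInt_parts_vanishing f df (c dc : R -> R) : C1on f df ->
  (forall t, is_derive c t (dc t)) -> (forall t, continuous dc t) ->
  f (- PI) = 0 -> f PI = 0 ->
  RInt (fun t => df t * c t) (- PI) PI = - RInt (fun t => f t * dc t) (- PI) PI.
Proof.
  intros Hf Hc Hdc Hlo Hhi. pose proof PI_RGT_0.
  assert (Hbounds : forall t, Rmin (- PI) PI <= t <= Rmax (- PI) PI -> - PI <= t <= PI)
    by (intros t; rewrite Rmin_left, Rmax_right by lra; auto).
  assert (Hcc : forall t, continuous c t)
    by (intros t; apply (ex_derive_continuous (V := R_NormedModule)); exists (dc t); auto).
  assert (Hfdc : forall t, - PI <= t <= PI -> continuous (fun t => f t * dc t) t)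
    by (intros t Ht; apply (continuous_mult (K := R_AbsRing));
        [eapply C1on_continuous; eauto | apply Hdc]).
  assert (Hprod : is_RInt (fun t => df t * c t + f t * dc t) (- PI) PI 0).
  { replace 0 with (minus (f PI * c PI) (f (- PI) * c (- PI)))
      by (rewrite Hlo, Hhi; unfold minus, plus, opp; simpl; ring).
    apply (is_RInt_derive (fun t => f t * c t)).
    - intros t Ht. apply Hbounds in Ht. apply (is_derive_mult (K := R_AbsRing));
        [apply Hf, Ht | apply Hc | intros; simpl; unfold mult; simpl; ring].
    - intros t Ht. apply Hbounds in Ht. apply (continuous_plus (V := R_NormedModule));
        [apply (continuous_mult (K := R_AbsRing)); [apply Hf, Ht | apply Hcc] | auto]. }
  assert (Hint : is_RInt (fun t => f t * dc t) (- PI) PI (RInt (fun t => f t * dc t) (- PI) PI)).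
  { apply (RInt_correct (V := R_CompleteNormedModule)),
      (ex_RInt_continuous (V := R_CompleteNormedModule)).
    intros t Ht. apply Hfdc, Hbounds, Ht. }
  replace (- RInt (fun t => f t * dc t) (- PI) PI)
    with (minus 0 (RInt (fun t => f t * dc t) (- PI) PI))
    by (unfold minus, plus, opp; simpl; ring).
  apply is_RInt_unique. eapply is_RInt_ext; [|apply (is_RInt_minus _ _ _ _ _ _ Hprod Hint)].
  intros t _. unfold minus, plus, opp; simpl. ring.
Qed.

Lemma ex_RInt_mul_trig f df (g : R -> R) : C1on f df -> (forall t, continuous g t) ->
  ex_RInt (fun t => f t * g t) (- PI) PI.
Proof.
  intros Hf Hg. pose proof PI_RGT_0. apply (ex_RInt_continuous (V := R_CompleteNormedModule)).
  intros t Ht. rewrite Rmin_left, Rmax_right in Ht by lra.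
  apply (continuous_mult (K := R_AbsRing)); [eapply C1on_continuous; eauto | apply Hg].
Qed.

Lemma continuous_cos_mul k t : continuous (fun t => cos (k * t)) t.
Proof. apply (ex_derive_continuous (V := R_NormedModule)). auto_derive. auto. Qed.

Lemma continuous_sin_mul k t : continuous (fun t => sin (k * t)) t.
Proof. apply (ex_derive_continuous (V := R_NormedModule)). auto_derive. auto. Qed.

Lemma RInt_mul_const_l (f : R -> R) k : ex_RInt f (- PI) PI ->
  RInt (fun t => k * f t) (- PI) PI = k * RInt f (- PI) PI.
Proof.
  intros Hf. rewrite (RInt_ext _ (fun t => scal k (f t))) by reflexivity.
  apply (RInt_scal (V := R_CompleteNormedModule)), Hf.
Qed.

Lemma fa_derive f df k : C1on f df -> f (- PI) = 0 -> f PI = 0 -> fa df k = INR k * fb f k.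
Proof.
  intros Hf Hlo Hhi. unfold fa, fb.
  rewrite (RInt_parts_vanishing f df _ (fun t => - INR k * sin (INR k * t))); auto.
  - rewrite (RInt_ext _ (fun t => - INR k * (f t * sin (INR k * t)))) by (intros; simpl; ring).
    rewrite RInt_mul_const_l; [ring|].
    eapply ex_RInt_mul_trig; [eauto | apply continuous_sin_mul].
  - intros t. auto_derive; auto. ring.
  - intros t. apply (continuous_mult (K := R_AbsRing) (fun _ => - INR k));
      [apply continuous_const | apply continuous_sin_mul].
Qed.

Lemma fb_derive f df k : C1on f df -> f (- PI) = 0 -> f PI = 0 -> fb df k = - INR k * fa f k.
Proof.
  intros Hf Hlo Hhi. unfold fa, fb.
  rewrite (RInt_parts_vanishing f df _ (fun t => INR k * cos (INR k * t))); auto.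
  - rewrite (RInt_ext _ (fun t => INR k * (f t * cos (INR k * t)))) by (intros; simpl; ring).
    rewrite RInt_mul_const_l; [ring|].
    eapply ex_RInt_mul_trig; [eauto | apply continuous_cos_mul].
  - intros t. auto_derive; auto. ring.
  - intros t. apply (continuous_mult (K := R_AbsRing) (fun _ => INR k));
      [apply continuous_const | apply continuous_cos_mul].
Qed.

Lemma is_derive_sum_n_m (h : nat -> R -> R) (dh : nat -> R) w m n :
  (forall k, is_derive (h k) w (dh k)) ->
  is_derive (fun x => sum_n_m (fun k => h k x) m n) w (sum_n_m dh m n).
Proof.
  intros Hd. induction n as [|n IH].
  - destruct m.
    + rewrite sum_n_n. apply (is_derive_ext (h O)); [intros; rewrite sum_n_n|]; auto.
    + rewrite (sum_n_m_zero (G := R_AbelianMonoid)) by lia.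
      apply (is_derive_ext (fun _ => zero));
        [intros; rewrite (sum_n_m_zero (G := R_AbelianMonoid)) by lia; auto|].
      apply (is_derive_const (K := R_AbsRing) (V := R_NormedModule)).
  - destruct (Nat.le_gt_cases m (S n)).
    + rewrite (sum_n_Sm (G := R_AbelianMonoid)) by lia.
      apply (is_derive_ext (fun x => plus (sum_n_m (fun k => h k x) m n) (h (S n) x)));
        [intros; rewrite (sum_n_Sm (G := R_AbelianMonoid)) by lia; auto|].
      apply (is_derive_plus (K := R_AbsRing) (V := R_NormedModule)); auto.
    + rewrite (sum_n_m_zero (G := R_AbelianMonoid)) by lia.
      apply (is_derive_ext (fun _ => zero));
        [intros; rewrite (sum_n_m_zero (G := R_AbelianMonoid)) by lia; auto|].
      apply (is_derive_const (K := R_AbsRing) (V := R_NormedModule)).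
Qed.

Lemma is_derive_usum lam n f w :
  is_derive (usum lam n f) w
    (sum_n_m (fun k => lam n k * (fa f k * (- INR k * sin (INR k * w))
                                  + fb f k * (INR k * cos (INR k * w)))) 1 n).
Proof.
  unfold usum.
  apply (is_derive_ext (fun x => plus (fa f 0 / 2)
    (sum_n_m (fun k => lam n k * (fa f k * cos (INR k * x) + fb f k * sin (INR k * x))) 1 n)));
    [reflexivity|].
  rewrite <- (plus_zero_l (G := R_AbelianMonoid) (sum_n_m _ 1 n)).
  apply (is_derive_plus (K := R_AbsRing) (V := R_NormedModule));
    [apply (is_derive_const (K := R_AbsRing) (V := R_NormedModule))|].
  apply (is_derive_sum_n_m
    (fun k x => lam n k * (fa f k * cos (INR k * x) + fb f k * sin (INR k * x)))).
  intros k. auto_derive; auto. ring.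
Qed.

Lemma continuous_usum lam n f w : continuous (usum lam n f) w.
Proof. apply (ex_derive_continuous (V := R_NormedModule)). eexists. apply is_derive_usum. Qed.

(* Integration by parts turns the Fourier coefficients of [df] into those of [f],
   so the method commutes with differentiation. *)
Lemma is_derive_usum_C1on lam n f df w : C1on f df -> f (- PI) = 0 -> f PI = 0 ->
  is_derive (usum lam n f) w (usum lam n df w).
Proof.
  intros Hf Hlo Hhi.
  replace (usum lam n df w) with (sum_n_m (fun k => lam n k * (fa f k * (- INR k * sin (INR k * w))
                                  + fb f k * (INR k * cos (INR k * w)))) 1 n);
    [apply is_derive_usum|].
  unfold usum. rewrite (fa_derive f df 0) by auto. simpl INR.
  replace (0 * fb f 0 / 2) with 0 by field. rewrite Rplus_0_l.
  apply (sum_n_m_ext (G := R_AbelianMonoid)). intros k.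
  rewrite (fa_derive f df k), (fb_derive f df k) by auto. simpl. ring.
Qed.

Lemma usum_red2pi lam n f w : usum lam n f (red2pi w) = usum lam n f w.
Proof.
  destruct (red2pi_decomp w) as [z Hz]. unfold usum. f_equal.
  apply (sum_n_m_ext (G := R_AbelianMonoid)). intros k.
  rewrite Hz at 3 4.
  replace (INR k * (red2pi w + 2 * PI * IZR z))
    with (INR k * red2pi w + 2 * PI * IZR (Z.of_nat k * z))
    by (rewrite mult_IZR, <- INR_IZR_INZ; ring).
  rewrite cos_period_Z, sin_period_Z. reflexivity.
Qed.

Lemma Rabs_le_supnorm a b f x : (forall t, a <= t <= b -> continuous f t) ->
  a <= x <= b -> Rabs (f x) <= supnorm a b f.
Proof.
  intros Hc Hx. unfold supnorm.
  destruct (continuity_ab_maj (fun t => Rabs (f t)) a b) as [m [Hm _]]; [lra| |].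
  { intros t Ht. apply continuity_pt_filterlim, continuous_Rabs_comp, Hc, Ht. }
  destruct (Lub_Rbar_correct (fun y => exists x, a <= x <= b /\ y = Rabs (f x))) as [Hub Hlub].
  assert (Hge : Rbar_le (Rabs (f x)) (Lub_Rbar (fun y => exists x, a <= x <= b /\ y = Rabs (f x))))
    by (apply Hub; exists x; auto).
  assert (Hle : Rbar_le (Lub_Rbar (fun y => exists x, a <= x <= b /\ y = Rabs (f x))) (Rabs (f m)))
    by (apply Hlub; intros y [z [Hz ->]]; simpl; auto).
  destruct (Lub_Rbar _); simpl in *; tauto.
Qed.

Lemma supnorm_nonneg a b f : a <= b -> 0 <= supnorm a b f.
Proof.
  intros Hab. unfold supnorm.
  destruct (Lub_Rbar_correct (fun y => exists x, a <= x <= b /\ y = Rabs (f x))) as [Hub _].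
  assert (Hge : Rbar_le (Rabs (f a)) (Lub_Rbar (fun y => exists x, a <= x <= b /\ y = Rabs (f x))))
    by (apply Hub; exists a; split; [lra | auto]).
  pose proof (Rabs_pos (f a)).
  destruct (Lub_Rbar _); simpl in *; lra || tauto.
Qed.

Lemma pow2_pos n : 0 < 2 ^ n.
Proof. apply pow_lt; lra. Qed.

Lemma inv_pow2_S n : / 2 ^ S n = / 2 ^ n / 2.
Proof. rewrite <- tech_pow_Rmult. field. apply pow_nonzero; lra. Qed.

Lemma inv_pow2_bounds n : 0 < / 2 ^ n <= 1.
Proof.
  split; [apply Rinv_0_lt_compat, pow2_pos|].
  induction n; [simpl; lra|]. rewrite inv_pow2_S.
  pose proof (Rinv_0_lt_compat _ (pow2_pos n)). lra.
Qed.

Lemma pow2_unbounded x : exists n, x <= 2 ^ n.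
Proof.
  destruct (Pow_x_infinity 2 ltac:(rewrite Rabs_pos_eq; lra) x) as [N HN].
  exists N. specialize (HN N (le_n N)).
  rewrite Rabs_pos_eq in HN by (apply Rlt_le, pow2_pos). lra.
Qed.

Lemma pprod_add g J n : pprod g (n + J) = pprod g J * pprod (fun i => g (J + i)%nat) n.
Proof.
  induction n as [|n IH]; simpl; [ring|].
  rewrite IH. replace (S (n + J)) with (J + S n)%nat by lia. ring.
Qed.

Lemma Rabs_pprod_le a M n : (forall j, Rabs (a j) <= M) -> 0 <= M -> Rabs (pprod a n) <= M ^ n.
Proof.
  intros Ha HM. induction n as [|n IH]; simpl; [rewrite Rabs_R1; lra|].
  rewrite Rabs_mult, Rmult_comm. apply Rmult_le_compat; auto using Rabs_pos.
Qed.

Lemma Rabs_pprod_sub_le a b M e n : 1 <= M ->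
  (forall j, Rabs (a j) <= M) -> (forall j, Rabs (b j) <= M) ->
  (forall j, Rabs (a j - b j) <= e) -> Rabs (pprod a n - pprod b n) <= INR n * M ^ n * e.
Proof.
  intros HM Ha Hb Hab. induction n as [|n IH]; simpl pprod.
  - rewrite Rminus_eq_0, Rabs_R0. simpl. lra.
  - replace (pprod a n * a (S n) - pprod b n * b (S n)) with
      ((pprod a n - pprod b n) * a (S n) + pprod b n * (a (S n) - b (S n))) by ring.
    eapply Rle_trans; [apply Rabs_triang|]. rewrite !Rabs_mult.
    pose proof (Rabs_pprod_le b M n Hb ltac:(lra)). pose proof (pos_INR n).
    pose proof (pow_le M n ltac:(lra)). pose proof (Rle_trans _ _ _ (Rabs_pos _) (Hab O)).
    assert (Rabs (pprod a n - pprod b n) * Rabs (a (S n)) <= INR n * M ^ n * e * M)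
      by (apply Rmult_le_compat; auto using Rabs_pos).
    assert (Rabs (pprod b n) * Rabs (a (S n) - b (S n)) <= M ^ n * e)
      by (apply Rmult_le_compat; auto using Rabs_pos).
    assert (M ^ n * e <= M ^ n * e * M) by (rewrite <- (Rmult_1_r (M ^ n * e)) at 1; apply Rmult_le_compat_l; nra).
    rewrite S_INR. simpl. nra.
Qed.

Section ConvergentProduct.

Variables (e : nat -> R) (r : R).
Hypothesis r_small : 0 <= r <= 1 / 4.
Hypothesis e_near_one : forall i, Rabs (e (S i) - 1) <= r * / 2 ^ i.

Lemma pprod_near_one n : Rabs (pprod e n - 1) <= 4 * r * (1 - / 2 ^ n).
Proof.
  induction n as [|n IH].
  - simpl. rewrite Rinv_1, Rminus_eq_0, Rabs_R0. lra.
  - simpl pprod. rewrite inv_pow2_S. specialize (e_near_one n).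
    pose proof (inv_pow2_bounds n).
    set (P := pprod e n) in *. set (x := e (S n)) in *. set (u := / 2 ^ n) in *.
    replace (P * x - 1) with ((P - 1) * x + (x - 1)) by ring.
    eapply Rle_trans; [apply Rabs_triang|]. rewrite Rabs_mult.
    assert (Hx : Rabs x <= 1 + r * u).
    { replace x with ((x - 1) + 1) by ring.
      eapply Rle_trans; [apply Rabs_triang|]. rewrite Rabs_R1. lra. }
    assert (Rabs (P - 1) * Rabs x <= 4 * r * (1 - u) * (1 + r * u))
      by (apply Rmult_le_compat; auto using Rabs_pos).
    assert (0 <= r * u) by (apply Rmult_le_pos; lra).
    assert (0 <= 4 * r * (1 - u) <= 1) by (split; [apply Rmult_le_pos|]; lra).
    nra.
Qed.

Lemma pprod_tail_diff n p : Rabs (pprod e (n + p) - pprod e n) <= 4 * r * (/ 2 ^ n - / 2 ^ (n + p)).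
Proof.
  induction p as [|p IH].
  - rewrite Nat.add_0_r, Rminus_eq_0, Rabs_R0. lra.
  - replace (n + S p)%nat with (S (n + p)) by lia.
    assert (Hstep : Rabs (pprod e (S (n + p)) - pprod e (n + p)) <= 2 * r * / 2 ^ (n + p)).
    { simpl pprod. replace (pprod e (n + p) * e (S (n + p)) - pprod e (n + p))
        with (pprod e (n + p) * (e (S (n + p)) - 1)) by ring.
      rewrite Rabs_mult. pose proof (pprod_near_one (n + p)).
      pose proof (inv_pow2_bounds (n + p)).
      assert (Rabs (pprod e (n + p)) <= 2).
      { replace (pprod e (n + p)) with ((pprod e (n + p) - 1) + 1) by ring.
        eapply Rle_trans; [apply Rabs_triang|]. rewrite Rabs_R1. nra. }
      replace (2 * r * / 2 ^ (n + p)) with (2 * (r * / 2 ^ (n + p))) by ring.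
      apply Rmult_le_compat; auto using Rabs_pos. }
    replace (pprod e (S (n + p)) - pprod e n) with
      ((pprod e (S (n + p)) - pprod e (n + p)) + (pprod e (n + p) - pprod e n)) by ring.
    eapply Rle_trans; [apply Rabs_triang|]. rewrite inv_pow2_S. lra.
Qed.

Lemma pprod_lim_near_one : exists L : R, is_lim_seq (pprod e) L /\ Rabs (L - 1) <= 4 * r.
Proof.
  assert (Hcauchy : ex_finite_lim_seq (pprod e)).
  { apply ex_lim_seq_cauchy_corr. intros eps.
    assert (Hy : 0 < eps / (4 * r + 1)) by (apply Rdiv_lt_0_compat; [apply cond_pos | lra]).
    destruct (pow_lt_1_zero (/ 2) ltac:(rewrite Rabs_pos_eq; lra) _ Hy) as [N HN].
    assert (Hgen : forall n m, (N <= n)%nat -> (n <= m)%nat ->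
                     Rabs (pprod e n - pprod e m) < eps).
    { intros n m Hn Hnm. replace m with (n + (m - n))%nat by lia.
      rewrite Rabs_minus_sym. eapply Rle_lt_trans; [apply pprod_tail_diff|].
      pose proof (inv_pow2_bounds (n + (m - n))). pose proof (inv_pow2_bounds n).
      specialize (HN n Hn).
      rewrite pow_inv, Rabs_pos_eq in HN by apply Rlt_le, inv_pow2_bounds.
      apply Rmult_lt_compat_r with (r := 4 * r + 1) in HN; [|lra].
      unfold Rdiv in HN. rewrite Rmult_assoc, Rinv_l, Rmult_1_r in HN by lra. nra. }
    exists N. intros n m Hn Hm. destruct (Nat.le_ge_cases n m); [apply Hgen; auto|].
    rewrite Rabs_minus_sym. apply Hgen; auto. }
  destruct Hcauchy as [L HL]. exists L. split; [exact HL|].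
  assert (Hlim : is_lim_seq (fun n => Rabs (pprod e n - 1)) (Rabs (L - 1))).
  { apply (is_lim_seq_abs _ (L - 1)), is_lim_seq_minus'; [exact HL | apply is_lim_seq_const]. }
  assert (Hbound : forall n, Rabs (pprod e n - 1) <= 4 * r)
    by (intros n; pose proof (pprod_near_one n); pose proof (inv_pow2_bounds n); nra).
  exact (is_lim_seq_le _ _ _ _ Hbound Hlim (is_lim_seq_const (4 * r))).
Qed.

End ConvergentProduct.

(* [prod_{j <= J} g j] has size at most [2^J] and the tail is within [4 r] of 1;
   [J 2^J e] comes from comparing the first [J] factors with those of [q]. *)
Lemma pprod_lim_close (g q : nat -> R) J r e : 0 <= r <= 1 / 4 ->
  (forall i, Rabs (g (J + S i)%nat - 1) <= r * / 2 ^ i) ->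
  (forall j, Rabs (q j) <= 1) -> (forall j, Rabs (g j - q j) <= e) -> e <= 1 ->
  exists L : R, is_lim_seq (pprod g) L /\
    Rabs (L - pprod q J) <= 2 ^ J * (4 * r) + INR J * 2 ^ J * e.
Proof.
  intros Hr Htail Hq Hgq He.
  destruct (pprod_lim_near_one (fun i => g (J + i)%nat) r Hr Htail) as [T [HT HT1]].
  assert (Hg : forall j, Rabs (g j) <= 2).
  { intros j. replace (g j) with ((g j - q j) + q j) by ring.
    eapply Rle_trans; [apply Rabs_triang|]. specialize (Hgq j). specialize (Hq j). lra. }
  exists (pprod g J * T). split.
  - apply (is_lim_seq_incr_n _ J).
    apply is_lim_seq_ext with (fun n => pprod g J * pprod (fun i => g (J + i)%nat) n);
      [intros n; symmetry; apply pprod_add|].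
    apply (is_lim_seq_scal_l _ (pprod g J) T), HT.
  - replace (pprod g J * T - pprod q J)
      with (pprod g J * (T - 1) + (pprod g J - pprod q J)) by ring.
    eapply Rle_trans; [apply Rabs_triang|]. rewrite Rabs_mult.
    apply Rplus_le_compat.
    + apply Rmult_le_compat; auto using Rabs_pos. apply Rabs_pprod_le; auto; lra.
    + apply Rabs_pprod_sub_le; auto; [lra|]. intros j. specialize (Hq j). lra.
Qed.

Lemma Rabs_pow_le1 x n : Rabs x <= 1 -> Rabs (x ^ n) <= 1.
Proof.
  intros Hx. rewrite <- RPow_abs. rewrite <- (pow1 n).
  apply pow_incr. split; [apply Rabs_pos | exact Hx].
Qed.

Lemma Rabs_cos_le1 x : Rabs (cos x) <= 1.
Proof. apply Rabs_le, COS_bound. Qed.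

Lemma is_derive_cos_half_pow l t :
  is_derive (fun t => cos (t / 2) ^ (2 * l)) t (- INR l * (cos (t / 2) ^ pred (2 * l) * sin (t / 2))).
Proof.
  auto_derive; auto. replace (l + (l + 0))%nat with (2 * l)%nat by lia.
  rewrite mult_INR. change (INR 2) with (1 + 1). unfold Rdiv. field.
Qed.

Lemma Rabs_cos_half_pow_derive_le l t :
  Rabs (- INR l * (cos (t / 2) ^ pred (2 * l) * sin (t / 2))) <= INR l.
Proof.
  rewrite Rabs_mult, Rabs_Ropp, Rabs_pos_eq by apply pos_INR.
  rewrite <- (Rmult_1_r (INR l)) at 2. apply Rmult_le_compat_l; [apply pos_INR|].
  rewrite Rabs_mult, <- (Rmult_1_r 1).
  apply Rmult_le_compat; auto using Rabs_pos, Rabs_pow_le1, Rabs_cos_le1.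
  apply Rabs_le, SIN_bound.
Qed.

Lemma cos_half_pow_red2pi x l : cos (red2pi x / 2) ^ (2 * l) = cos (x / 2) ^ (2 * l).
Proof.
  rewrite !pow_mult. f_equal.
  destruct (red2pi_decomp x) as [z Hz].
  assert (Hsq : forall u, cos (u / 2) ^ 2 = (1 + cos u) / 2)
    by (intros u; replace u with (2 * (u / 2)) at 2 by field; rewrite cos_2a_cos; field).
  rewrite !Hsq, <- (cos_period_Z (red2pi x) z), <- Hz. reflexivity.
Qed.

Section ApproximationErrors.

Variables (theta : R -> R) (omega0 : R) (lam : nat -> nat -> R) (nl : nat -> nat).

Lemma alpha_nonneg l : 0 <= alpha theta omega0 lam nl l.
Proof. apply supnorm_nonneg. pose proof PI_RGT_0. lra. Qed.

Lemma gamma_nonneg l : 0 <= gamma theta omega0 lam nl l.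
Proof. apply supnorm_nonneg. pose proof PI_RGT_0. lra. Qed.

Lemma mu_nonneg l : 0 <= mu theta omega0 lam nl l.
Proof.
  pose proof (alpha_nonneg l). pose proof (gamma_nonneg l). pose proof (pos_INR l).
  unfold mu. nra.
Qed.

Lemma alpha_le_mu l : (1 <= l)%nat -> alpha theta omega0 lam nl l <= mu theta omega0 lam nl l.
Proof.
  intros Hl. pose proof (alpha_nonneg l). pose proof (gamma_nonneg l).
  pose proof (le_INR _ _ Hl). unfold mu. simpl in *. nra.
Qed.

End ApproximationErrors.

Section Meyer.

Variables (theta : R -> R) (omega0 : R).
Hypothesis theta_odd : forall x, theta (- x) = - theta x.
Hypothesis theta_derivable : forall x, ex_derive theta x.
Hypothesis theta'_derivable : forall x, ex_derive (Derive theta) x.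
Hypothesis theta_flat : forall x, x > PI / 3 -> theta x = PI / 4.
Hypothesis omega0_range : PI / 3 <= omega0 < PI / 2.

Local Notation kappa := (PI / (3 * (PI - 2 * omega0))).
Local Notation phiM := (phiM theta omega0).
Local Notation mM := (mM theta omega0).
Local Notation mMl := (mMl theta omega0).

Lemma theta_right x : x >= PI / 3 -> theta x = PI / 4.
Proof.
  intros Hx. destruct (Rgt_dec x (PI / 3)); [auto|]. replace x with (PI / 3) by lra.
  apply continuous_eq_right; [|exact theta_flat].
  apply (ex_derive_continuous (V := R_NormedModule)), theta_derivable.
Qed.

Lemma theta_left x : x <= - (PI / 3) -> theta x = - (PI / 4).
Proof. intros Hx. rewrite <- (Ropp_involutive x), theta_odd, theta_right; lra. Qed.

Lemma kappa_facts :
  kappa * (2 * omega0 - PI) = - (PI / 3) /\ kappa * (PI - 2 * omega0) = PI / 3 /\ 1 <= kappa.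
Proof.
  pose proof PI_RGT_0. assert (0 < PI - 2 * omega0) by lra.
  split; [field; lra | split; [field; lra|]].
  apply Rmult_le_reg_r with (3 * (PI - 2 * omega0)); [lra|].
  unfold Rdiv. rewrite Rmult_assoc, Rinv_l; lra.
Qed.

Lemma phiM_cos w : phiM w = cos (PI / 4 + theta (kappa * (Rabs w - PI))).
Proof.
  destruct kappa_facts as (Hlo & Hhi & Hk). pose proof PI_RGT_0. unfold Defs.phiM.
  destruct (Rle_dec (Rabs w) (2 * omega0)).
  - rewrite theta_left, Rplus_opp_r, cos_0; [reflexivity|].
    rewrite <- Hlo. apply Rmult_le_compat_l; lra.
  - destruct (Rle_dec (Rabs w) (2 * PI - 2 * omega0)); [reflexivity|].
    rewrite theta_right; [|rewrite <- Hhi; apply Rle_ge, Rmult_le_compat_l; lra].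
    replace (PI / 4 + PI / 4) with (PI / 2) by field. rewrite cos_PI2. reflexivity.
Qed.

(* On each half-line one of the two angles is [<= - PI/3], where [theta] is flat;
   this removes [Rabs] and exhibits [phiM] as a C^1 function. *)
Lemma phiM_sin w : phiM w = - sin (theta (kappa * (w - PI)) + theta (kappa * (- w - PI))).
Proof.
  destruct kappa_facts as (Hlo & Hhi & Hk). pose proof PI_RGT_0.
  assert (Hflat : forall v, 0 <= v -> theta (kappa * (- v - PI)) = - (PI / 4)).
  { intros v Hv. apply theta_left.
    apply Rle_trans with (kappa * (- PI)); [apply Rmult_le_compat_l; lra | nra]. }
  rewrite phiM_cos, sin_cos, Ropp_involutive.
  destruct (Rle_dec 0 w).
  - rewrite Rabs_pos_eq, (Hflat w) by lra. f_equal. field.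
  - rewrite Rabs_left by lra.
    replace (kappa * (w - PI)) with (kappa * (- - w - PI)) by ring.
    rewrite (Hflat (- w)) by lra. f_equal. field.
Qed.

Lemma phiM_one w : Rabs w <= 2 * omega0 -> phiM w = 1.
Proof. intros Hw. unfold Defs.phiM. destruct (Rle_dec (Rabs w) (2 * omega0)); tauto. Qed.

Lemma phiM_zero w : Rabs w >= 2 * PI - 2 * omega0 -> phiM w = 0.
Proof.
  intros Hw. destruct kappa_facts as (_ & Hhi & Hk). rewrite phiM_cos.
  rewrite theta_right; [|rewrite <- Hhi; apply Rle_ge, Rmult_le_compat_l; lra].
  replace (PI / 4 + PI / 4) with (PI / 2) by field. apply cos_PI2.
Qed.

Lemma Rabs_phiM_le1 w : Rabs (phiM w) <= 1.
Proof. rewrite phiM_cos. apply Rabs_cos_le1. Qed.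

Lemma mM_eq y : - PI <= y < PI -> mM y = phiM (2 * y).
Proof. intros Hy. unfold Defs.mM. now rewrite red2pi_id. Qed.

Lemma mM_red2pi y : mM (red2pi y) = mM y.
Proof. unfold Defs.mM. now rewrite red2pi_idem. Qed.

Lemma Rabs_mM_le1 y : Rabs (mM y) <= 1.
Proof. apply Rabs_phiM_le1. Qed.

Lemma mM_one y : Rabs y <= omega0 -> mM y = 1.
Proof.
  intros Hy. pose proof PI_RGT_0. apply Rabs_le_between in Hy.
  rewrite mM_eq by lra. apply phiM_one, Rabs_le. lra.
Qed.

Lemma mM_zero y : PI - omega0 < Rabs y < PI + omega0 -> mM y = 0.
Proof.
  intros Hy. pose proof PI_RGT_0.
  destruct (Rlt_le_dec y (- PI)) as [Hlt | Hge]; [|destruct (Rlt_le_dec y PI) as [Hlt' | Hge']].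
  - rewrite Rabs_left in Hy by lra.
    rewrite <- mM_red2pi, (red2pi_shift y (-1)) by (simpl; lra).
    rewrite mM_eq by (simpl; lra). apply phiM_zero.
    simpl. rewrite Rabs_pos_eq; lra.
  - rewrite mM_eq by lra. apply phiM_zero.
    rewrite Rabs_mult, (Rabs_pos_eq 2); lra.
  - rewrite Rabs_pos_eq in Hy by lra.
    rewrite <- mM_red2pi, (red2pi_shift y 1) by (simpl; lra).
    rewrite mM_eq by (simpl; lra). apply phiM_zero.
    simpl. rewrite Rabs_left1; lra.
Qed.

Lemma phiM_two_scale x : phiM x = mM (x / 2) * phiM (x / 2).
Proof.
  pose proof PI_RGT_0.
  assert (Hhalf : Rabs (x / 2) = Rabs x / 2)
    by (unfold Rdiv; rewrite Rabs_mult, Rabs_inv, (Rabs_pos_eq 2); lra).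
  destruct (Rle_dec (Rabs x) (4 * omega0)) as [Hsmall | Hlarge].
  - rewrite (phiM_one (x / 2)), mM_eq, Rmult_1_r; [f_equal; field | |lra].
    apply Rabs_le_between in Hsmall. lra.
  - rewrite phiM_zero by lra.
    destruct (Rle_dec (2 * PI - 2 * omega0) (Rabs (x / 2))).
    + rewrite (phiM_zero (x / 2)) by lra. ring.
    + rewrite (mM_zero (x / 2)) by lra. ring.
Qed.

Lemma phiM_pprod w N :
  phiM w = pprod (fun j => mM (w / 2 ^ j)) N * phiM (w / 2 ^ N).
Proof.
  induction N as [|N IH]; [simpl; rewrite Rdiv_1_r; ring|].
  rewrite IH, (phiM_two_scale (w / 2 ^ N)). simpl pprod. rewrite tech_pow_Rmult.
  replace (w / 2 ^ N / 2) with (w / 2 ^ S N); [ring|].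
  rewrite <- tech_pow_Rmult. field. apply pow_nonzero. lra.
Qed.

Lemma phiM_eq_pprod w N : Rabs w <= 2 * omega0 * 2 ^ N ->
  pprod (fun j => mM (w / 2 ^ j)) N = phiM w.
Proof.
  intros Hw. pose proof (pow2_pos N).
  rewrite (phiM_pprod w N), phiM_one; [ring|].
  rewrite Rabs_div, (Rabs_pos_eq (2 ^ N)) by lra.
  apply Rmult_le_reg_r with (2 ^ N); [lra|].
  unfold Rdiv. rewrite Rmult_assoc, Rinv_l; lra.
Qed.

Let mMl_smooth (l : nat) (y : R) : R :=
  - sin (theta (kappa * (2 * y - PI)) + theta (kappa * (- (2 * y) - PI))) / cos (y / 2) ^ (2 * l).

Let mMl_smooth' (l : nat) (y : R) : R :=
  let s := theta (kappa * (2 * y - PI)) + theta (kappa * (- (2 * y) - PI)) in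
  let ds := 2 * kappa * Derive theta (kappa * (2 * y - PI))
            - 2 * kappa * Derive theta (kappa * (- (2 * y) - PI)) in
  let c := cos (y / 2) ^ (2 * l) in
  let dc := - INR l * (cos (y / 2) ^ pred (2 * l) * sin (y / 2)) in
  (- cos s * ds * c + sin s * dc) / (c * c).

Lemma is_derive_mMl_smooth l y : cos (y / 2) <> 0 ->
  is_derive (mMl_smooth l) y (mMl_smooth' l y).
Proof.
  intros Hc. unfold mMl_smooth, mMl_smooth'. auto_derive.
  - repeat split; auto. apply pow_nonzero, Hc.
  - replace (l + (l + 0))%nat with (2 * l)%nat by lia.
    rewrite mult_INR. change (INR 2) with (1 + 1).
    change (Derive (fun x => theta x)) with (Derive theta).
    unfold Rdiv, Rminus. field. split; [apply pow_nonzero, Hc | lra].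
Qed.

Lemma continuous_mMl_smooth' l y : cos (y / 2) <> 0 -> continuous (mMl_smooth' l) y.
Proof.
  intros Hc. apply (ex_derive_continuous (V := R_NormedModule)). unfold mMl_smooth'. auto_derive.
  repeat split; auto. apply Rmult_integral_contrapositive; split; apply pow_nonzero, Hc.
Qed.

Lemma mMl_eq_smooth l y : Rabs y < PI -> mMl l y = mMl_smooth l y.
Proof.
  intros Hy. apply Rabs_def2 in Hy. unfold Defs.mMl, mMl_smooth.
  rewrite mM_eq, phiM_sin by lra. reflexivity.
Qed.

Lemma mMl_zero l y : PI - omega0 < Rabs y < PI + omega0 -> mMl l y = 0.
Proof. intros Hy. unfold Defs.mMl. rewrite mM_zero by exact Hy. unfold Rdiv. ring. Qed.

Lemma mMl_C1on l : C1on (mMl l) (Derive (mMl l)).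
Proof.
  intros y Hy. pose proof PI_RGT_0.
  assert (Htri : forall z, Rabs z <= Rabs (z - y) + Rabs y)
    by (intros z; replace z with ((z - y) + y) at 1 by ring; apply Rabs_triang).
  assert (Hcos : forall z, Rabs z < PI -> cos (z / 2) <> 0)
    by (intros z Hz; apply Rabs_def2 in Hz; apply Rgt_not_eq, cos_gt_0; lra).
  destruct (Rlt_dec (Rabs y) (PI - omega0 / 2)) as [Hin | Hout].
  - destruct (C1_of_locally_eq (mMl l) (mMl_smooth l) (mMl_smooth' l) y (PI - omega0 / 2 - Rabs y))
      as [Hd Hc]; [lra | | | |].
    + intros z Hz. apply mMl_eq_smooth. specialize (Htri z). lra.
    + intros z Hz. apply is_derive_mMl_smooth, Hcos. specialize (Htri z). lra.
    + apply continuous_mMl_smooth', Hcos. lra.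
    + rewrite (is_derive_unique _ _ _ Hd). auto.
  - assert (Hy' : Rabs y <= PI) by (apply Rabs_le; lra).
    destruct (C1_of_locally_eq (mMl l) (fun _ => 0) (fun _ => 0) y (omega0 / 2))
      as [Hd Hc]; [lra | | | |].
    + intros z Hz. apply mMl_zero.
      assert (Rabs y <= Rabs (y - z) + Rabs z)
        by (replace y with ((y - z) + z) at 1 by ring; apply Rabs_triang).
      rewrite Rabs_minus_sym in Hz. specialize (Htri z). rewrite Rabs_minus_sym in Htri. lra.
    + intros z _. apply (is_derive_const (K := R_AbsRing) (V := R_NormedModule)).
    + apply continuous_const.
    + rewrite (is_derive_unique _ _ _ Hd). auto.
Qed.

Lemma mMl_at_0 l : mMl l 0 = 1.
Proof.
  pose proof PI_RGT_0. unfold Defs.mMl.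
  rewrite mM_one by (rewrite Rabs_R0; lra).
  replace (0 / 2) with 0 by field. rewrite cos_0, pow1. field.
Qed.

Lemma mM_eq_cos_pow_mMl l y : - PI <= y < PI -> mM y = cos (y / 2) ^ (2 * l) * mMl l y.
Proof.
  intros Hy. pose proof PI_RGT_0. unfold Defs.mMl.
  destruct (Req_dec (cos (y / 2)) 0) as [Hc | Hc].
  - assert (y = - PI) as ->.
    { destruct (Req_dec y (- PI)); auto.
      assert (0 < cos (y / 2)) by (apply cos_gt_0; lra). lra. }
    rewrite mM_zero; [unfold Rdiv; ring|]. rewrite Rabs_Ropp, Rabs_pos_eq; lra.
  - field. apply pow_nonzero, Hc.
Qed.

Variables (lam : nat -> nat -> R) (nl : nat -> nat).

Local Notation ul := (ul theta omega0 lam nl).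
Local Notation u1l := (u1l theta omega0 lam nl).
Local Notation ml := (ml theta omega0 lam nl).
Local Notation alpha := (alpha theta omega0 lam nl).
Local Notation gamma := (gamma theta omega0 lam nl).
Local Notation mu := (mu theta omega0 lam nl).

Lemma mMl_at_pi l : mMl l (- PI) = 0 /\ mMl l PI = 0.
Proof.
  pose proof PI_RGT_0.
  split; apply mMl_zero; rewrite ?Rabs_Ropp, Rabs_pos_eq; lra.
Qed.

Lemma is_derive_ul l w : is_derive (ul l) w (u1l l w).
Proof.
  destruct (mMl_at_pi l). apply is_derive_usum_C1on; auto. apply mMl_C1on.
Qed.

Lemma Rabs_ul_sub_le_alpha l w : - PI <= w <= PI -> Rabs (ul l w - mMl l w) <= alpha l.
Proof.
  apply (Rabs_le_supnorm _ _ (fun w => ul l w - mMl l w)). intros t Ht.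
  apply (continuous_minus (V := R_NormedModule)); [apply continuous_usum|].
  eapply C1on_continuous; [apply mMl_C1on | exact Ht].
Qed.

Lemma Rabs_u1l_sub_le_gamma l w : - PI <= w <= PI ->
  Rabs (u1l l w - Derive (mMl l) w) <= gamma l.
Proof.
  apply (Rabs_le_supnorm _ _ (fun w => u1l l w - Derive (mMl l) w)). intros t Ht.
  apply (continuous_minus (V := R_NormedModule)); [apply continuous_usum | apply mMl_C1on, Ht].
Qed.

Lemma ml_red2pi l x : ml l (red2pi x) = ml l x.
Proof. unfold Defs.ml, Defs.ul. now rewrite usum_red2pi, cos_half_pow_red2pi. Qed.

(* With [c = cos (y/2) ^ (2 l)] one has [mM y = c * mMl y] and [mMl 0 = 1], so
   [ml y - mM y = (c (ul y - mMl y) + mM y (mMl 0 - ul 0)) / ul 0]. *)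
Lemma ml_close_mM l x : 0 < Rabs (ul l 0) ->
  Rabs (ml l x - mM x) <= 2 * alpha l / Rabs (ul l 0).
Proof.
  intros HD. pose proof PI_RGT_0.
  assert (HU0 : ul l 0 <> 0) by (intros E; rewrite E, Rabs_R0 in HD; lra).
  rewrite <- ml_red2pi, <- mM_red2pi. set (y := red2pi x).
  assert (Hy : - PI <= y < PI) by apply red2pi_range.
  set (c := cos (y / 2) ^ (2 * l)).
  assert (Hy_err : Rabs (ul l y - mMl l y) <= alpha l) by (apply Rabs_ul_sub_le_alpha; lra).
  assert (H0_err : Rabs (1 - ul l 0) <= alpha l).
  { rewrite Rabs_minus_sym, <- (mMl_at_0 l). apply Rabs_ul_sub_le_alpha; lra. }
  assert (Hc : Rabs c <= 1) by apply Rabs_pow_le1, Rabs_cos_le1.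
  assert (Hm : Rabs (mM y) <= 1) by apply Rabs_mM_le1.
  assert (E : ml l y - mM y = (c * (ul l y - mMl l y) + mM y * (1 - ul l 0)) / ul l 0).
  { rewrite (mM_eq_cos_pow_mMl l y Hy). unfold Defs.ml. fold c. field. exact HU0. }
  rewrite E. unfold Rdiv. rewrite Rabs_mult, Rabs_inv.
  apply Rmult_le_compat_r; [apply Rlt_le, Rinv_0_lt_compat, HD|].
  eapply Rle_trans; [apply Rabs_triang|]. rewrite !Rabs_mult.
  assert (Rabs c * Rabs (ul l y - mMl l y) <= 1 * alpha l)
    by (apply Rmult_le_compat; auto using Rabs_pos).
  assert (Rabs (mM y) * Rabs (1 - ul l 0) <= 1 * alpha l)
    by (apply Rmult_le_compat; auto using Rabs_pos).
  lra.
Qed.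

(* Near 0 one has [cos (t/2) ^ (2 l) * mMl t = mM t = 1], so [ml x - 1 = (h x - h 0) / ul 0]
   for [h t = cos (t/2) ^ (2 l) * (ul t - mMl t)], and [|h'| <= l alpha + gamma = mu]. *)
Lemma ml_near_one l x : 0 < Rabs (ul l 0) -> Rabs x <= omega0 ->
  Rabs (ml l x - 1) <= mu l * Rabs x / Rabs (ul l 0).
Proof.
  intros HD Hx. pose proof PI_RGT_0.
  assert (HU0 : ul l 0 <> 0) by (intros E; rewrite E, Rabs_R0 in HD; lra).
  assert (Hin : forall t, Rabs t <= omega0 -> - PI <= t <= PI)
    by (intros t Ht; apply Rabs_le_between in Ht; lra).
  set (h := fun t => cos (t / 2) ^ (2 * l) * (ul l t - mMl l t)).
  set (dh := fun t => - INR l * (cos (t / 2) ^ pred (2 * l) * sin (t / 2)) * (ul l t - mMl l t)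
        + cos (t / 2) ^ (2 * l) * (u1l l t - Derive (mMl l) t)).
  assert (Hd : forall t, Rabs (t - 0) <= omega0 -> is_derive h t (dh t)).
  { intros t Ht. rewrite Rminus_0_r in Ht.
    apply (is_derive_mult (K := R_AbsRing) (fun t => cos (t / 2) ^ (2 * l)) (fun t => ul l t - mMl l t));
      [apply is_derive_cos_half_pow | | intros; simpl; unfold mult; simpl; ring].
    apply (is_derive_minus (K := R_AbsRing) (V := R_NormedModule));
      [apply is_derive_ul | apply mMl_C1on, Hin, Ht]. }
  destruct (MVT_cor4 h dh 0 omega0 Hd x) as [c0 [Hmvt Hc0]]; [rewrite Rminus_0_r; exact Hx|].
  rewrite !Rminus_0_r in Hmvt, Hc0.
  assert (Hc0' : Rabs c0 <= omega0)
    by (eapply Rle_trans; [exact Hc0|]; rewrite Rminus_0_r; exact Hx).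
  assert (E : ml l x - 1 = (h x - h 0) / ul l 0).
  { assert (Hx1 : cos (x / 2) ^ (2 * l) * mMl l x = 1)
      by (rewrite <- mM_eq_cos_pow_mMl by (apply Rabs_le_between in Hx; lra); apply mM_one, Hx).
    unfold h, Defs.ml. replace (0 / 2) with 0 by field.
    rewrite cos_0, pow1, mMl_at_0, Rmult_minus_distr_l, Hx1. field. exact HU0. }
  rewrite E, Hmvt. unfold Rdiv. rewrite !Rabs_mult, Rabs_inv.
  apply Rmult_le_compat_r; [apply Rlt_le, Rinv_0_lt_compat, HD|].
  apply Rmult_le_compat_r; [apply Rabs_pos|].
  unfold dh, Defs.mu. eapply Rle_trans; [apply Rabs_triang|]. rewrite !Rabs_mult.
  pose proof (Rabs_ul_sub_le_alpha l c0 (Hin c0 Hc0')).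
  pose proof (Rabs_u1l_sub_le_gamma l c0 (Hin c0 Hc0')).
  pose proof (Rabs_cos_half_pow_derive_le l c0) as Hdc. rewrite !Rabs_mult in Hdc.
  pose proof (Rabs_pow_le1 (cos (c0 / 2)) (2 * l) (Rabs_cos_le1 _)).
  rewrite <- (Rmult_1_l (gamma l)).
  apply Rplus_le_compat; apply Rmult_le_compat; auto using Rabs_pos, Rmult_le_pos.
Qed.

Lemma ml_dyadic_near_one l J w i : 0 < Rabs (ul l 0) -> Rabs w <= omega0 * 2 ^ J ->
  Rabs (ml l (w / 2 ^ (J + S i)) - 1) <= mu l * omega0 / Rabs (ul l 0) * / 2 ^ i.
Proof.
  intros HD Hw. pose proof (pow2_pos J). pose proof (pow2_pos i). pose proof PI_RGT_0.
  assert (Hx : Rabs (w / 2 ^ (J + S i)) <= omega0 * / 2 ^ i / 2).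
  { rewrite Rabs_div, (Rabs_pos_eq (2 ^ _)), pow_add, <- tech_pow_Rmult
      by (apply Rlt_le, pow2_pos || apply pow_nonzero; lra).
    apply Rmult_le_reg_r with (2 ^ J * (2 * 2 ^ i)); [nra|].
    unfold Rdiv. rewrite Rmult_assoc, Rinv_l by nra.
    replace (omega0 * / 2 ^ i * / 2 * (2 ^ J * (2 * 2 ^ i))) with (omega0 * 2 ^ J)
      by (field; lra). lra. }
  pose proof (inv_pow2_bounds i).
  eapply Rle_trans; [apply ml_near_one; [exact HD | nra]|].
  pose proof (Rinv_0_lt_compat _ HD). unfold Rdiv.
  replace (mu l * omega0 * / Rabs (ul l 0) * / 2 ^ i)
    with (mu l * (omega0 * / 2 ^ i) * / Rabs (ul l 0)) by ring.
  apply Rmult_le_compat_r; [lra|]. apply Rmult_le_compat_l; [apply mu_nonneg|].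
  unfold Rdiv in Hx. nra.
Qed.

Lemma phil_close_phiM l J w : (1 <= l)%nat -> 0 < Rabs (ul l 0) -> Rabs w <= omega0 * 2 ^ J ->
  4 * omega0 * mu l <= Rabs (ul l 0) -> 2 * mu l <= Rabs (ul l 0) ->
  Rabs (phil theta omega0 lam nl l w - phiM w)
    <= (2 ^ J * 4 * omega0 + INR J * 2 ^ J * 2) * mu l / Rabs (ul l 0).
Proof.
  intros Hl HD Hw Hr He. set (D := Rabs (ul l 0)) in *.
  pose proof (alpha_nonneg theta omega0 lam nl l).
  pose proof (alpha_le_mu theta omega0 lam nl l Hl). pose proof (mu_nonneg theta omega0 lam nl l).
  pose proof (pow2_pos J). pose proof (pos_INR J). pose proof PI_RGT_0.
  destruct (pprod_lim_close (fun j => ml l (w / 2 ^ j)) (fun j => mM (w / 2 ^ j)) J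
              (mu l * omega0 / D) (2 * alpha l / D)) as [L [HL Hbound]].
  - split; [apply Rdiv_le_0_compat; nra|].
    apply Rmult_le_reg_r with D; [exact HD|]. unfold Rdiv. rewrite Rmult_assoc, Rinv_l; lra.
  - intros i. apply ml_dyadic_near_one; assumption.
  - intros j. apply Rabs_mM_le1.
  - intros j. apply ml_close_mM, HD.
  - apply Rmult_le_reg_r with D; [exact HD|]. unfold Rdiv. rewrite Rmult_assoc, Rinv_l; lra.
  - unfold Defs.phil.
    rewrite (is_lim_seq_unique (fun N => pprod (fun j => ml l (w / 2 ^ j)) N) L HL). simpl.
    rewrite <- (phiM_eq_pprod w J) by nra.
    eapply Rle_trans; [exact Hbound|]. unfold Rdiv.
    replace ((2 ^ J * 4 * omega0 + INR J * 2 ^ J * 2) * mu l * / D)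
      with (2 ^ J * (4 * (mu l * omega0 * / D)) + INR J * 2 ^ J * (2 * mu l * / D)) by ring.
    apply Rplus_le_compat_l, Rmult_le_compat_l; [nra|].
    apply Rmult_le_compat_r; [apply Rlt_le, Rinv_0_lt_compat, HD | lra].
Qed.

End Meyer.

Theorem lemma3
  (theta : R -> R) (omega0 : R) (lam : nat -> nat -> R) (nl : nat -> nat) (l0 : nat)
  (* theta odd, non-decreasing, C^2, equal to pi/4 beyond pi/3 *)
  (Hodd : forall x, theta (- x) = - theta x)
  (Hmono : forall x y, x <= y -> theta x <= theta y)
  (Hd1 : forall x, ex_derive theta x)
  (Hd2 : forall x, ex_derive (Derive theta) x)
  (Hd2c : forall x, continuous (Derive (Derive theta)) x)
  (Hflat : forall x, x > PI / 3 -> theta x = PI / 4)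
  (Hw0 : PI / 3 <= omega0 < PI / 2)
  (* standing assumptions on the summation method *)
  (Halpha : is_lim_seq (fun l => INR l * alpha theta omega0 lam nl l) 0)
  (Hgamma : is_lim_seq (fun l => gamma theta omega0 lam nl l) 0)
  (Hpi : forall l, ul theta omega0 lam nl l PI <> 0)
  (Hl0 : exists delta, 0 < delta /\
           forall l, (l0 <= l)%nat -> delta <= Rabs (ul theta omega0 lam nl l 0)) :
  forall a b, a < b ->
    exists C, exists L, forall l, (L <= l)%nat -> (l0 <= l)%nat ->
      forall w, a <= w <= b ->
        Rabs (phil theta omega0 lam nl l w - phiM theta omega0 w)
          <= C * mu theta omega0 lam nl l.
Proof.
  intros a b Hab. destruct Hl0 as [delta [Hdelta Hdelta_le]]. pose proof PI_RGT_0.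
  assert (Hmu : is_lim_seq (mu theta omega0 lam nl) 0).
  { replace (Finite 0) with (Rbar_plus 0 0) by (simpl; f_equal; ring).
    apply is_lim_seq_plus'; assumption. }
  assert (Heps : 0 < delta / (4 * omega0 + 2)) by (apply Rdiv_lt_0_compat; lra).
  apply is_lim_seq_spec in Hmu. destruct (Hmu (mkposreal _ Heps)) as [L HL]. simpl in HL.
  destruct (pow2_unbounded (Rmax b (- a) / omega0)) as [J HJ].
  set (K := 2 ^ J * 4 * omega0 + INR J * 2 ^ J * 2).
  exists (K / delta), (Nat.max L 1). intros l HlL Hll0 w Hw.
  set (m := mu theta omega0 lam nl l). set (D := Rabs (ul theta omega0 lam nl l 0)).
  pose proof (Hdelta_le l Hll0) as HD. fold D in HD.
  pose proof (mu_nonneg theta omega0 lam nl l) as Hm. fold m in Hm.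
  assert (Hsmall : m * (4 * omega0 + 2) < delta).
  { specialize (HL l ltac:(lia)). rewrite Rminus_0_r, Rabs_pos_eq in HL by exact Hm.
    apply Rmult_lt_reg_r with (/ (4 * omega0 + 2)); [apply Rinv_0_lt_compat; lra|].
    rewrite Rmult_assoc, Rinv_r, Rmult_1_r by lra. exact HL. }
  assert (HwJ : Rabs w <= omega0 * 2 ^ J).
  { apply Rabs_le_between_Rmax in Hw.
    apply Rmult_le_compat_l with (r := omega0) in HJ; [|lra].
    unfold Rdiv in HJ. rewrite <- Rmult_assoc, Rinv_r_simpl_m in HJ by lra. lra. }
  eapply Rle_trans;
    [apply (phil_close_phiM theta omega0 Hodd Hd1 Hd2 Hflat Hw0 lam nl l J w);
       fold m D; [lia | lra | exact HwJ | nra | nra]|].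
  fold m D K.
  assert (HK : 0 <= K) by (pose proof (pow2_pos J); pose proof (pos_INR J); unfold K; nra).
  replace (K / delta * m) with (K * m * / delta) by (field; lra).
  apply Rmult_le_compat_l; [nra|]. apply Rinv_le_contravar; lra.
Qed.
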